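(* Let $\mathcal{G}$ be a family of nonatomic routing problems with homogeneous users and let $T$ be an incentive mechanism on $L(\mathcal{G})$. For $\lambda>0$ define the incentive mechanism $T_\lambda(\ell)=\lambda T(\ell)+(\lambda-1)\ell$ for $\ell\in L(\mathcal{G})$. Then $\mathrm{PoA}(\mathcal{G},T)=\mathrm{PoA}(\mathcal{G},T_\lambda)$.
   Context: A routing problem $G$ consists of a directed graph $(V,E)$, origin–destination pairs $(o_i,d_i)$ with traffic masses $r_i>0$, $\sum_i r_i=1$, and for each edge $e$ a nonnegative nondecreasing latency function $\ell_e$. Let $\mathcal{P}_i$ be the set of simple $o_i$–$d_i$ paths. A flow assigns mass $f_P\ge0$ to each path, is feasible if $\sum_{P\in\mathcal{P}_i}f_P=r_i$, and has edge flows $f_e=\sum_{P\ni e}f_P$; its total latency is $\mathcal{L}(f)=\sum_e f_e\ell_e(f_e)$, and $\mathcal{L}^{\mathrm{opt}}(G)$ is the minimum over feasible flows. Users form a continuum $N=\bigcup_iN_i$ of disjoint intervals of Lebesgue measure $r_i$; users in $N_i$ choose paths in $\mathcal{P}_i$. For a family $\mathcal{G}$, $L(\mathcal{G})$ is the set of latency functions occurring in it. An incentive mechanism $T$ assigns to each $\ell\in L(\mathcal{G})$ a function $T(\ell):[0,1]\to\mathbb{R}$; edge $e$ receives $\tau_e=T(\ell_e)$. With homogeneous users, a user $x\in N_i$ on path $P$ under flow $f$ has cost $J_x(P,f)=\sum_{e\in P}(\ell_e(f_e)+\tau_e(f_e))$; a Nash flow is a feasible flow in which every user uses a cost-minimizing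 path in $\mathcal{P}_i$. $\mathcal{L}^{\mathrm{Nash}}(G,T)$ is the highest total latency of a Nash flow, and $\mathrm{PoA}(\mathcal{G},T)=\sup_{G\in\mathcal{G}}\mathcal{L}^{\mathrm{Nash}}(G,T)/\mathcal{L}^{\mathrm{opt}}(G)$. *)

From HB Require Import structures.
From mathcomp Require Import all_boot all_order all_algebra.
From mathcomp Require Import classical_sets boolp fsbigop reals constructive_ereal ereal.
Set Implicit Arguments. Unset Strict Implicit. Unset Printing Implicit Defensive.
Import Order.TTheory GRing.Theory Num.Theory.
Local Open Scope classical_set_scope.
Local Open Scope ring_scope.

Record routing (R : realType) := Routing {
  vert : finType;
  edge : finType;
  esrc : edge -> vert;
  edst : edge -> vert;
  comm : finType;
  orig : comm -> vert;
  dest : comm -> vert;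
  mass : comm -> R;
  mass_pos : forall i, 0 < mass i;
  mass_sum : \sum_(i : comm) mass i = 1;
  lat : edge -> R -> R;
  lat_ge0 : forall e x, 0 <= x -> 0 <= lat e x;
  lat_nondecr : forall e x y, 0 <= x -> x <= y -> lat e x <= lat e y
}.

Section Routing.
Variable R : realType.
Variable G : routing R.

Fixpoint walk (u v : vert G) (p : seq (edge G)) : bool :=
  match p with
  | [::] => u == v
  | e :: p' => (esrc e == u) && walk (edst e) v p'
  end.

Definition simple_path (u v : vert G) (p : seq (edge G)) : bool :=
  walk u v p && uniq (u :: map (@edst R G) p).

Definition paths (i : comm G) : set (seq (edge G)) :=
  [set p | simple_path (orig i) (dest i) p].

Definition pflow := comm G -> seq (edge G) -> R.

Definition feasible (f : pflow) : Prop :=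
  (forall i p, 0 <= f i p) /\
  (forall i p, ~ paths i p -> f i p = 0) /\
  (forall i, \sum_(p \in paths i) f i p = mass i).

Definition eflow (f : pflow) (e : edge G) : R :=
  \sum_(i : comm G) \sum_(p \in paths i) (if e \in p then f i p else 0).

Definition total_lat (f : pflow) : R :=
  \sum_(e : edge G) eflow f e * lat e (eflow f e).

Definition path_cost (T : (R -> R) -> (R -> R)) (f : pflow)
  (p : seq (edge G)) : R :=
  \sum_(e <- p) (lat e (eflow f e) + T (lat e) (eflow f e)).

Definition nash (T : (R -> R) -> (R -> R)) (f : pflow) : Prop :=
  feasible f /\
  forall i p q, paths i p -> 0 < f i p -> paths i q ->
    path_cost T f p <= path_cost T f q.

Local Open Scope ereal_scope.

Definition LNash (T : (R -> R) -> (R -> R)) : \bar R :=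
  ereal_sup [set (total_lat f)%:E | f in nash T].

Definition Lopt : \bar R :=
  ereal_inf [set (total_lat f)%:E | f in feasible].

End Routing.

Local Open Scope ereal_scope.

(* (a family is a predicate on routing problems; `set` would clash with
   universe constraints, so we use a plain predicate) *)
Definition PoA (R : realType) (fam : routing R -> Prop)
  (T : (R -> R) -> (R -> R)) : \bar R :=
  ereal_sup (fun y : \bar R => exists2 G, fam G & y = LNash G T / Lopt G).

Definition Tlam (R : realType) (lam : R) (T : (R -> R) -> (R -> R)) :
  (R -> R) -> (R -> R) :=
  fun l x => (lam * T l x + (lam - 1) * l x)%R.

From mathcomp Require Import all_boot all_order all_algebra.
From mathcomp Require Import classical_sets boolp fsbigop reals constructive_ereal ereal.
From mathcomp Require Import ring.
Import Order.TTheory GRing.Theory Num.Theory.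
Local Open Scope classical_set_scope.
Local Open Scope ring_scope.

(* Under [Tlam lam T] a user on path P pays lam times what it pays under T,
   since l + (lam T l + (lam - 1) l) = lam (l + T l) on every edge.  Scaling
   all path costs by a positive constant does not change which paths are
   cost-minimizing, so both mechanisms have the same Nash flows, hence the
   same worst Nash latency on every instance and the same price of anarchy. *)

Section NashInvariance.
Variables (R : realType) (G : routing R).

Lemma path_cost_Tlam (T : (R -> R) -> R -> R) (lam : R) f p :
  path_cost (G:=G) (Tlam lam T) f p = lam * path_cost T f p.
Proof.
by rewrite /path_cost /Tlam big_distrr /=; apply: eq_bigr => e _; ring.
Qed.

Lemma nash_path_cost_scale (T T' : (R -> R) -> R -> R) (c : R) :
  0 < c -> (forall f p, path_cost (G:=G) T' f p = c * path_cost T f p) ->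
  nash (G:=G) T' = nash T.
Proof.
move=> c_gt0 costT'; apply/funext => f; apply/propext.
rewrite /nash; split=> -[feas_f minimal]; split=> // i p q Pp fp_gt0 Pq.
  by rewrite -(ler_pM2l c_gt0) -!costT'; exact: minimal Pp fp_gt0 Pq.
by rewrite !costT' ler_pM2l //; exact: minimal Pp fp_gt0 Pq.
Qed.

Lemma LNash_Tlam (T : (R -> R) -> R -> R) (lam : R) :
  0 < lam -> LNash G (Tlam lam T) = LNash G T.
Proof.
move=> lam_gt0; rewrite /LNash (@nash_path_cost_scale T _ lam) //.
exact: path_cost_Tlam.
Qed.

End NashInvariance.

Lemma PoA_eq_of_LNash (R : realType) (fam : routing R -> Prop)
  (T T' : (R -> R) -> R -> R) :
  (forall G, LNash G T = LNash G T') -> PoA fam T = PoA fam T'.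
Proof.
move=> LNashTT'; rewrite /PoA; congr ereal_sup.
apply/funext => y; apply/propext.
by split=> -[G famG ->]; exists G => //; rewrite LNashTT'.
Qed.

Theorem lemma1 (R : realType) (fam : routing R -> Prop)
  (T : (R -> R) -> (R -> R)) (lam : R) :
  0 < lam -> PoA fam T = PoA fam (Tlam lam T).
Proof.
by move=> lam_gt0; apply: PoA_eq_of_LNash => G; rewrite LNash_Tlam.
Qed.
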